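(* Over all 3-periodics of $\mathcal{E}$, the centroid $X_2^\dagger$ of the focus-inversive triangle moves on the circle with center and radius \[C_2^\dagger=\left(-c\left(1+\rho^2\frac{2a^2-b^2-\delta}{3a^2b^2}\right),0\right),\qquad R_2^\dagger=\rho^2\,\frac{2a^2-b^2-\delta}{3ab^2}.\]
   Context: Let $a>b>0$ and let $\mathcal{E}$ be the ellipse $x^2/a^2+y^2/b^2=1$. Set $c=\sqrt{a^2-b^2}$, $\delta=\sqrt{a^4-a^2b^2+b^4}$, and let the foci be $f_1=(-c,0)$, $f_2=(c,0)$. A 3-periodic is a triangle $P_1P_2P_3$ with vertices on $\mathcal{E}$ such that at each vertex the normal to $\mathcal{E}$ bisects the angle formed by the two sides meeting at that vertex; these form a one-parameter family (one through every point of $\mathcal{E}$). Fix $\rho>0$; the focus-inversive triangle has vertices $P_i^\dagger=f_1+(\rho/d_{1,i})^2(P_i-f_1)$, $d_{1,i}=|P_i-f_1|$. *)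

From Stdlib Require Import Reals.
Open Scope R_scope.

Definition pt := (R * R)%type.

Definition padd (P Q : pt) : pt := (fst P + fst Q, snd P + snd Q).
Definition psub (P Q : pt) : pt := (fst P - fst Q, snd P - snd Q).
Definition pscale (k : R) (P : pt) : pt := (k * fst P, k * snd P).
Definition dot (P Q : pt) : R := fst P * fst Q + snd P * snd Q.
Definition pdist (P Q : pt) : R := sqrt (dot (psub P Q) (psub P Q)).

Definition on_ellipse (a b : R) (P : pt) : Prop :=
  (fst P) ^ 2 / a ^ 2 + (snd P) ^ 2 / b ^ 2 = 1.

(* A normal vector to the ellipse at P (gradient / 2). *)
Definition ellipse_normal (a b : R) (P : pt) : pt :=
  (fst P / a ^ 2, snd P / b ^ 2).

Definition unit_dir (P Q : pt) : pt := pscale (/ pdist Q P) (psub Q P).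

(* The normal line to the ellipse at P bisects the angle Q P S formed by the
   sides PQ and PS: the normal makes equal angles with the unit vectors
   along PQ and PS, i.e. it is orthogonal to their difference
   (equivalently, parallel to their sum, the internal bisector). *)
Definition normal_bisects (a b : R) (P Q S : pt) : Prop :=
  dot (ellipse_normal a b P) (psub (unit_dir P Q) (unit_dir P S)) = 0.

Definition three_periodic (a b : R) (P1 P2 P3 : pt) : Prop :=
  on_ellipse a b P1 /\ on_ellipse a b P2 /\ on_ellipse a b P3 /\
  P1 <> P2 /\ P2 <> P3 /\ P1 <> P3 /\
  normal_bisects a b P1 P2 P3 /\
  normal_bisects a b P2 P3 P1 /\
  normal_bisects a b P3 P1 P2.

Definition ell_c (a b : R) : R := sqrt (a ^ 2 - b ^ 2).
Definition ell_delta (a b : R) : R := sqrt (a ^ 4 - a ^ 2 * b ^ 2 + b ^ 4).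
Definition focus1 (a b : R) : pt := (- ell_c a b, 0).

Definition focus_inv (a b rho : R) (P : pt) : pt :=
  padd (focus1 a b)
       (pscale ((rho / pdist P (focus1 a b)) ^ 2) (psub P (focus1 a b))).

Definition centroid (P1 P2 P3 : pt) : pt :=
  pscale (/ 3) (padd P1 (padd P2 P3)).

From Stdlib Require Import Reals Nsatz Lra Psatz.
Open Scope R_scope.

(* Describe every point P of the ellipse by its focal direction u = (C, S), the
   unit vector from the focus f1 to P.  By the polar equation of the ellipse,
   |P - f1| (a - c C) = b^2, so the focus-inverse of P is
   f1 + rho^2 (a - c C)/b^2 u, which is quadratic in u.
   For a 3-periodic, Joachimsthal's invariant (normal component of the unit
   chord direction) takes the same value on the three sides.  Written in focal
   directions, this says that the three directions pairwise satisfy one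
   symmetric "chord relation" u.v - g (u_x + v_x) + K = 0.  For three distinct
   unit vectors this forces u1 + u2 + u3 = (g, 0) and K = (1 + g^2)/2, which pins
   down a c g = 2a^2 - b^2 - delta, the smaller root of an explicit quadratic.
   The distance from the centroid of the inverted triangle to C2 then depends
   only on sum C_i^2 and sum C_i S_i, controlled by the second power sum of
   three unit complex numbers with real sum g. *)

Lemma sqnorm_pos (v : pt) : v <> (0, 0) -> 0 < dot v v.
Proof.
  destruct v as [x y]; unfold dot; cbn [fst snd]; intros hv.
  destruct (Req_dec x 0) as [->|hx].
  - assert (y <> 0) by (intros ->; apply hv; reflexivity). nra.
  - assert (0 < x * x) by nra. nra.
Qed.

Lemma psub_neq0 (P Q : pt) : P <> Q -> psub P Q <> (0, 0).
Proof.
  destruct P as [x y], Q as [x' y']; unfold psub; cbn [fst snd]; intros hne h.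
  injection h as hx hy; apply hne; f_equal; lra.
Qed.

(* For three points of the unit circle, 4 (twice the area)^2 is the product of the
   squared side lengths: the relation abc = 4 R Area with circumradius R = 1. *)
Lemma unit_triangle_area (u1 u2 u3 : pt) :
  dot u1 u1 = 1 -> dot u2 u2 = 1 -> dot u3 u3 = 1 ->
  let v := psub u1 u2 in let w := psub u1 u3 in let z := psub u2 u3 in
  4 * ((fst v * snd w - snd v * fst w) * (fst v * snd w - snd v * fst w))
  = dot v v * dot w w * dot z z.
Proof.
  destruct u1, u2, u3; unfold dot, psub; cbn [fst snd]; cbv zeta; intros; nsatz.
Qed.

Lemma unit_triangle_nondegenerate (u1 u2 u3 : pt) :
  dot u1 u1 = 1 -> dot u2 u2 = 1 -> dot u3 u3 = 1 ->
  u1 <> u2 -> u1 <> u3 -> u2 <> u3 ->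
  let v := psub u1 u2 in let w := psub u1 u3 in
  fst v * snd w - snd v * fst w <> 0.
Proof.
  intros h1 h2 h3 d12 d13 d23 v w hD.
  pose proof (unit_triangle_area u1 u2 u3 h1 h2 h3) as harea; cbv zeta in harea.
  fold v w in harea; rewrite hD, Rmult_0_l, Rmult_0_r in harea.
  pose proof (sqnorm_pos _ (psub_neq0 _ _ d12)) as hv.
  pose proof (sqnorm_pos _ (psub_neq0 _ _ d13)) as hw.
  pose proof (sqnorm_pos _ (psub_neq0 _ _ d23)) as hz.
  fold v w in hv, hw.
  pose proof (Rmult_lt_0_compat _ _ (Rmult_lt_0_compat _ _ hv hw) hz). lra.
Qed.

Lemma orthogonal_to_basis (s v w : pt) :
  dot s v = 0 -> dot s w = 0 -> fst v * snd w - snd v * fst w <> 0 -> s = (0, 0).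
Proof.
  destruct s as [x y], v as [v1 v2], w as [w1 w2]; unfold dot; cbn [fst snd].
  intros hv hw hD.
  assert (hx : x * (v1 * w2 - v2 * w1) = 0).
  { transitivity (w2 * (x * v1 + y * v2) - v2 * (x * w1 + y * w2)); [ring|].
    rewrite hv, hw; ring. }
  assert (hy : y * (v1 * w2 - v2 * w1) = 0).
  { transitivity (v1 * (x * w1 + y * w2) - w1 * (x * v1 + y * v2)); [ring|].
    rewrite hv, hw; ring. }
  apply Rmult_integral in hx, hy.
  destruct hx as [->|]; [|contradiction]; destruct hy as [->|]; [reflexivity|contradiction].
Qed.

(* Joachimsthal's quantity of the chord PQ: the component of the normal at P along
   the unit direction of PQ.  It is conserved along billiard trajectories. *)
Definition joachimsthal (a b : R) (P Q : pt) : R :=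
  dot (ellipse_normal a b P) (psub Q P) / pdist Q P.

Lemma normal_bisects_joachimsthal (a b : R) (P Q S : pt) :
  normal_bisects a b P Q S -> joachimsthal a b P Q = joachimsthal a b P S.
Proof.
  destruct P as [p1 p2], Q as [q1 q2], S as [s1 s2].
  unfold normal_bisects, joachimsthal, unit_dir, dot, psub, pscale, ellipse_normal;
    cbn [fst snd].
  intros h; apply Rminus_diag_uniq; rewrite <- h; unfold Rdiv; ring.
Qed.

Lemma pdist_sym (P Q : pt) : pdist P Q = pdist Q P.
Proof. destruct P, Q; unfold pdist, dot, psub; cbn [fst snd]; f_equal; ring. Qed.

(* The quantity of a chord does not depend on the endpoint chosen: both equal
   (xx'/a^2 + yy'/b^2 - 1) / |PQ|. *)
Lemma joachimsthal_sym (a b : R) (P Q : pt) : 0 < a -> 0 < b ->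
  on_ellipse a b P -> on_ellipse a b Q -> joachimsthal a b P Q = joachimsthal a b Q P.
Proof.
  intros ha hb hP hQ; unfold joachimsthal; rewrite pdist_sym; f_equal.
  destruct P as [p1 p2], Q as [q1 q2];
    unfold on_ellipse, dot, psub, ellipse_normal in *; cbn [fst snd] in *.
  apply Rminus_diag_uniq.
  transitivity ((q1^2/a^2 + q2^2/b^2) - (p1^2/a^2 + p2^2/b^2)); [field; lra|lra].
Qed.

Lemma ellipse_param (a b : R) (P : pt) : 0 < a -> 0 < b -> on_ellipse a b P ->
  exists X Y, P = (a * X, b * Y) /\ X * X + Y * Y = 1.
Proof.
  destruct P as [x y]; unfold on_ellipse; cbn [fst snd]; intros ha hb h.
  exists (x / a), (y / b); split.
  - f_equal; field; lra.
  - rewrite <- h; field; lra.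
Qed.

(* The square m of Joachimsthal's quantity of the chord between the parameters
   (X, Y), (X', Y') is characterized by 1 - <X, X'> = m L, with L the factor of
   |PQ|^2 = (1 - <X, X'>) L complementary to 1 - <X, X'>. *)
Lemma joachimsthal_param (a b X Y X' Y' : R) : 0 < a -> 0 < b ->
  X * X + Y * Y = 1 -> X' * X' + Y' * Y' = 1 -> (X, Y) <> (X', Y') ->
  1 - (X * X' + Y * Y')
  = joachimsthal a b (a * X, b * Y) (a * X', b * Y') ^ 2
    * (a * a + b * b - (a * a - b * b) * (X * X' - Y * Y')).
Proof.
  intros ha hb h h' hne.
  assert (hs : 0 < 1 - (X * X' + Y * Y')).
  { assert (2 * (1 - (X * X' + Y * Y')) = dot (psub (X, Y) (X', Y')) (psub (X, Y) (X', Y'))).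
    { unfold dot, psub; cbn [fst snd]; nsatz. }
    pose proof (sqnorm_pos _ (psub_neq0 _ _ hne)); lra. }
  assert (hden : (a * X' - a * X) * (a * X' - a * X) + (b * Y' - b * Y) * (b * Y' - b * Y)
    = (1 - (X * X' + Y * Y')) * (a * a + b * b - (a * a - b * b) * (X * X' - Y * Y')))
    by (clear - h h'; nsatz).
  set (s := 1 - (X * X' + Y * Y')) in *.
  set (L := a * a + b * b - (a * a - b * b) * (X * X' - Y * Y')) in *.
  unfold joachimsthal, pdist, dot, psub, ellipse_normal; cbn [fst snd].
  assert (hnum : a * X / a ^ 2 * (a * X' - a * X) + b * Y / b ^ 2 * (b * Y' - b * Y) = - s).
  { transitivity (X * X' + Y * Y' - (X * X + Y * Y)); [field; lra|rewrite h; unfold s; ring]. }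
  rewrite hnum, hden.
  assert (hPQ : (a * X', b * Y') <> (a * X, b * Y)).
  { intros e; injection e as eX eY; apply hne.
    apply Rmult_eq_reg_l in eX, eY; [subst; reflexivity|lra|lra]. }
  assert (hsL : 0 < s * L).
  { rewrite <- hden; exact (sqnorm_pos _ (psub_neq0 _ _ hPQ)). }
  assert (hL : L <> 0) by (intros ->; lra).
  unfold Rdiv; rewrite Rpow_mult_distr, pow_inv, pow2_sqrt by lra.
  field; split; lra.
Qed.

(* The symmetric relation satisfied by the focal directions of any two vertices
   of a 3-periodic, for parameters g, K depending only on the 3-periodic. *)
Definition chord_rel (g K : R) (u v : pt) : Prop :=
  dot u v - g * (fst u + fst v) + K = 0.


Lemma chord_rel_sym (g K : R) (u v : pt) : chord_rel g K u v -> chord_rel g K v u.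
Proof. unfold chord_rel, dot; intros h; rewrite <- h; ring. Qed.

(* Subtracting the relations of u1 and u2 with u3: the vector u1 + u2 + u3 - (g, 0)
   is orthogonal to u1 - u2. *)
Lemma chord_rel_difference (g K : R) (u1 u2 u3 : pt) :
  dot u1 u1 = 1 -> dot u2 u2 = 1 ->
  chord_rel g K u1 u3 -> chord_rel g K u2 u3 ->
  dot (psub (padd u1 (padd u2 u3)) (g, 0)) (psub u1 u2) = 0.
Proof.
  destruct u1, u2, u3; unfold chord_rel, dot, psub, padd; cbn [fst snd]; intros; nsatz.
Qed.

Lemma chord_rel_constant (g K C1 S1 C2 S2 C3 S3 : R) :
  C1*C1+S1*S1 = 1 -> C2*C2+S2*S2 = 1 -> C3*C3+S3*S3 = 1 ->
  C1*C2+S1*S2 - g*(C1+C2) + K = 0 ->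
  C1*C3+S1*S3 - g*(C1+C3) + K = 0 ->
  C2*C3+S2*S3 - g*(C2+C3) + K = 0 ->
  C1 + (C2 + C3) = g -> S1 + (S2 + S3) = 0 -> 2 * K = 1 + g * g.
Proof. intros; nsatz. Qed.

(* For unit z_i = C_i + i S_i with real sum g, the second power sum equals
   g^2 - 2 g z1 z2 z3, of modulus 2|g|; in coordinates, with sum C_i^2 and
   sum C_i S_i. *)
Lemma unit_triple_second_moment (g C1 S1 C2 S2 C3 S3 : R) :
  C1*C1+S1*S1 = 1 -> C2*C2+S2*S2 = 1 -> C3*C3+S3*S3 = 1 ->
  C1 + (C2 + C3) = g -> S1 + (S2 + S3) = 0 ->
  (g*g + 3 - 2*(C1*C1+C2*C2+C3*C3)) * (g*g + 3 - 2*(C1*C1+C2*C2+C3*C3))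
  + 4 * ((C1*S1+C2*S2+C3*S3) * (C1*S1+C2*S2+C3*S3)) = 4 * (g * g).
Proof. intros; nsatz. Qed.

Lemma unit_triple_sum (g K : R) (u1 u2 u3 : pt) :
  dot u1 u1 = 1 -> dot u2 u2 = 1 -> dot u3 u3 = 1 ->
  u1 <> u2 -> u1 <> u3 -> u2 <> u3 ->
  chord_rel g K u1 u2 -> chord_rel g K u1 u3 -> chord_rel g K u2 u3 ->
  padd u1 (padd u2 u3) = (g, 0) /\ 2 * K = 1 + g * g.
Proof.
  intros h1 h2 h3 d12 d13 d23 r12 r13 r23.
  assert (hs : psub (padd u1 (padd u2 u3)) (g, 0) = (0, 0)).
  { apply (orthogonal_to_basis _ (psub u1 u2) (psub u1 u3)).
    - exact (chord_rel_difference g K u1 u2 u3 h1 h2 r13 r23).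
    - replace (padd u1 (padd u2 u3)) with (padd u1 (padd u3 u2))
        by (unfold padd; f_equal; cbn [fst snd]; ring).
      exact (chord_rel_difference g K u1 u3 u2 h1 h3 r12 (chord_rel_sym _ _ _ _ r23)).
    - exact (unit_triangle_nondegenerate u1 u2 u3 h1 h2 h3 d12 d13 d23). }
  assert (hsum : padd u1 (padd u2 u3) = (g, 0)).
  { revert hs; destruct (padd u1 (padd u2 u3)) as [x y]; unfold psub; cbn [fst snd].
    intros e; injection e as ex ey; f_equal; lra. }
  split; [exact hsum|].
  revert h1 h2 h3 r12 r13 r23 hsum; destruct u1, u2, u3; unfold chord_rel, dot, padd;
    cbn [fst snd]; intros h1 h2 h3 r12 r13 r23 hsum; injection hsum as hC hS.
  exact (chord_rel_constant _ _ _ _ _ _ _ _ h1 h2 h3 r12 r13 r23 hC hS).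
Qed.

Section FocalCoordinates.

Variables a b : R.
Hypothesis b_pos : 0 < b.
Hypothesis b_lt_a : b < a.

Local Notation c := (ell_c a b).
Local Notation f1 := (focus1 a b).
Local Notation delta := (ell_delta a b).

Lemma ell_c_sq : c * c = a * a - b * b.
Proof. unfold ell_c; rewrite sqrt_sqrt; nra. Qed.

Lemma ell_c_pos : 0 < c.
Proof. unfold ell_c; apply sqrt_lt_R0; nra. Qed.

Lemma ell_c_lt_a : c < a.
Proof. pose proof ell_c_sq; pose proof ell_c_pos; nra. Qed.

Lemma focal_radius (X Y : R) : X * X + Y * Y = 1 ->
  pdist (a * X, b * Y) f1 = a + c * X /\ 0 < a + c * X.
Proof.
  intros h; pose proof ell_c_sq as hc; pose proof ell_c_pos; pose proof ell_c_lt_a.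
  assert (hr : 0 < a + c * X) by (assert (X * X <= 1) by nra; nra).
  split; [|exact hr].
  unfold pdist, dot, psub, focus1; cbn [fst snd].
  replace ((a * X - - c) * (a * X - - c) + (b * Y - 0) * (b * Y - 0))
    with ((a + c * X) * (a + c * X)) by (clear - h hc; nsatz).
  apply sqrt_square; lra.
Qed.

Lemma focal_dir_param (X Y : R) : X * X + Y * Y = 1 ->
  unit_dir f1 (a * X, b * Y) = ((a * X + c) / (a + c * X), b * Y / (a + c * X)).
Proof.
  intros h; destruct (focal_radius X Y h) as [hd hr].
  unfold unit_dir; rewrite hd; unfold pscale, psub, focus1; cbn [fst snd].
  f_equal; field; lra.
Qed.

Lemma ellipse_focal_polar (P : pt) : on_ellipse a b P ->
  let u := unit_dir f1 P in
  dot u u = 1 /\ 0 < pdist P f1 /\ pdist P f1 * (a - c * fst u) = b ^ 2.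
Proof.
  intros hP u.
  destruct (ellipse_param a b P ltac:(lra) b_pos hP) as [X [Y [-> h]]].
  destruct (focal_radius X Y h) as [hd hr]; pose proof ell_c_sq as hc.
  unfold u; rewrite (focal_dir_param X Y h), hd; unfold dot; cbn [fst snd].
  split; [|split; [exact hr|]].
  - transitivity (((a * X + c) * (a * X + c) + (b * Y) * (b * Y)) / ((a + c * X) * (a + c * X)));
      [field; lra|].
    replace ((a * X + c) * (a * X + c) + (b * Y) * (b * Y))
      with ((a + c * X) * (a + c * X)) by (clear - h hc; nsatz).
    field; lra.
  - transitivity (a * a - c * c); [field; lra|rewrite hc; ring].
Qed.

Lemma unit_dir_recover (P Q : pt) : 0 < pdist Q P ->
  Q = padd P (pscale (pdist Q P) (unit_dir P Q)).
Proof.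
  intros hd; destruct P, Q; unfold unit_dir, padd, pscale, psub; cbn [fst snd].
  f_equal; field; lra.
Qed.

(* Each ray from the focus meets the ellipse once: by the polar equation the
   focal direction determines the focal radius, hence the point. *)
Lemma focal_dir_injective (P Q : pt) : on_ellipse a b P -> on_ellipse a b Q ->
  unit_dir f1 P = unit_dir f1 Q -> P = Q.
Proof.
  intros hP hQ hu.
  destruct (ellipse_focal_polar P hP) as [_ [hdP hpP]].
  destruct (ellipse_focal_polar Q hQ) as [_ [hdQ hpQ]].
  rewrite hu in hpP.
  assert (hd : pdist P f1 = pdist Q f1).
  { assert (hk : a - c * fst (unit_dir f1 Q) <> 0) by (intros e; rewrite e in hpQ; nra).
    apply (Rmult_eq_reg_r _ _ _ (eq_trans hpP (eq_sym hpQ)) hk). }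
  rewrite (unit_dir_recover _ _ hdP), (unit_dir_recover _ _ hdQ), hu, hd; reflexivity.
Qed.

Lemma focus_inv_focal (rho : R) (P : pt) : on_ellipse a b P ->
  let u := unit_dir f1 P in
  focus_inv a b rho P = padd f1 (pscale (rho ^ 2 * (a - c * fst u) / b ^ 2) u).
Proof.
  intros hP u; destruct (ellipse_focal_polar P hP) as [_ [hd hpolar]]; fold u in hpolar.
  replace (a - c * fst u) with (b ^ 2 / pdist P f1)
    by (apply (Rmult_eq_reg_l (pdist P f1)); [rewrite hpolar; field|]; lra).
  unfold u, focus_inv, unit_dir, padd, pscale; f_equal; cbn [fst snd]; field; lra.
Qed.

(* Joachimsthal's relation for a chord, rewritten in the focal directions
   (C, S) = ((a X + c)/(a + c X), b Y/(a + c X)) of its endpoints, after clearing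
   the denominators a + c X and a + c X'. *)
Lemma chord_focal_poly (m X Y X' Y' : R) :
  1 - (X * X' + Y * Y') = m * (a * a + b * b - (a * a - b * b) * (X * X' - Y * Y')) ->
  (1 + m * (c * c)) * ((a * X + c) * (a * X' + c) + (b * Y) * (b * Y'))
  - 2 * m * a * c * ((a * X + c) * (a + c * X') + (a * X' + c) * (a + c * X))
  + (m * (3 * (a * a) - b * b) - 1) * ((a + c * X) * (a + c * X')) = 0.
Proof. pose proof ell_c_sq; intros; nsatz. Qed.

Definition focal_g (m : R) : R := 2 * m * a * c / (1 + m * (c * c)).
Definition focal_K (m : R) : R := (m * (3 * (a * a) - b * b) - 1) / (1 + m * (c * c)).

Lemma joachimsthal_chord_rel (P Q : pt) : on_ellipse a b P -> on_ellipse a b Q -> P <> Q ->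
  let m := joachimsthal a b P Q ^ 2 in
  chord_rel (focal_g m) (focal_K m) (unit_dir f1 P) (unit_dir f1 Q).
Proof.
  intros hP hQ hne m.
  destruct (ellipse_param a b P ltac:(lra) b_pos hP) as [X [Y [-> h]]].
  destruct (ellipse_param a b Q ltac:(lra) b_pos hQ) as [X' [Y' [-> h']]].
  assert (hXY : (X, Y) <> (X', Y')) by (intros e; injection e as -> ->; apply hne; reflexivity).
  pose proof (joachimsthal_param a b X Y X' Y' ltac:(lra) b_pos h h' hXY) as hpair; fold m in hpair.
  pose proof (chord_focal_poly m X Y X' Y' hpair) as hpoly.
  assert (hq : 0 < 1 + m * (c * c)).
  { assert (0 <= m) by apply pow2_ge_0. pose proof ell_c_pos. nra. }
  pose proof (proj2 (focal_radius X Y h)); pose proof (proj2 (focal_radius X' Y' h')).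
  unfold chord_rel, focal_g, focal_K, dot.
  rewrite (focal_dir_param X Y h), (focal_dir_param X' Y' h'); cbn [fst snd].
  transitivity (((1 + m * (c * c)) * ((a * X + c) * (a * X' + c) + (b * Y) * (b * Y'))
    - 2 * m * a * c * ((a * X + c) * (a + c * X') + (a * X' + c) * (a + c * X))
    + (m * (3 * (a * a) - b * b) - 1) * ((a + c * X) * (a + c * X')))
    / ((1 + m * (c * c)) * (a + c * X) * (a + c * X'))).
  - field; repeat split; lra.
  - rewrite hpoly; field; repeat split; lra.
Qed.


Lemma ell_delta_sq : delta * delta = a * a * (a * a) - a * a * (b * b) + b * b * (b * b).
Proof.
  unfold ell_delta; rewrite sqrt_sqrt; [ring|].
  replace (a ^ 4 - a ^ 2 * b ^ 2 + b ^ 4) with ((a * a - b * b) ^ 2 + (a * b) ^ 2) by ring.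
  nra.
Qed.

(* k = 2a^2 - b^2 - delta is the smaller root of t^2 - (4a^2 - 2b^2) t + 3a^2c^2;
   this quadratic governs the x-coordinate of the sum of the focal directions. *)
Definition focal_quadratic (t : R) : R :=
  t * t - (4 * (a * a) - 2 * (b * b)) * t + 3 * (a * a) * (c * c).

Lemma ell_delta_root : focal_quadratic (2 * (a * a) - b * b - delta) = 0.
Proof. pose proof ell_c_sq; pose proof ell_delta_sq; unfold focal_quadratic; nsatz. Qed.

(* Both roots of the focal quadratic are positive, in particular 2a^2 - b^2 - delta. *)
Lemma ell_delta_root_pos : 0 < 2 * (a * a) - b * b - delta.
Proof.
  pose proof ell_delta_root as hr; unfold focal_quadratic in hr.
  pose proof ell_c_sq; pose proof ell_c_pos.
  set (k := 2 * (a * a) - b * b - delta) in *.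
  assert (0 < a * a * (c * c)) by (apply Rmult_lt_0_compat; nra).
  destruct (Rlt_or_le 0 k) as [|hk]; [assumption|].
  assert (0 <= (4 * (a * a) - 2 * (b * b)) * - k) by (apply Rmult_le_pos; nra).
  nra.
Qed.

Lemma focal_quadratic_small_root (t : R) :
  focal_quadratic t = 0 -> t < 2 * (a * a) -> t = 2 * (a * a) - b * b - delta.
Proof.
  unfold focal_quadratic; intros hq ht.
  pose proof ell_c_sq as hc; pose proof ell_delta_sq as hd2.
  assert (hd : 0 <= delta) by apply sqrt_pos.
  assert (hroots : (t - (2 * (a * a) - b * b - delta)) * (t - (2 * (a * a) - b * b + delta)) = 0)
    by (clear - hq hc hd2; nsatz).
  apply Rmult_integral in hroots; destruct hroots as [|hplus]; [lra|].
  assert (delta < b * b) by nra.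
  assert (b * b * (b * b) < delta * delta); [|nra].
  assert (0 < a * a * (a * a - b * b)) by (apply Rmult_lt_0_compat; nra). nra.
Qed.

(* For m >= 0, the consistency condition 2 K = 1 + g^2 of the chord relation
   with parameters (focal_g m, focal_K m) yields a c g = 2a^2 - b^2 - delta:
   a c g is a root of the focal quadratic, and it is the small one because
   c g < 2 a. *)
Lemma focal_g_value (m : R) : 0 <= m ->
  2 * focal_K m = 1 + focal_g m * focal_g m ->
  a * c * focal_g m = 2 * (a * a) - b * b - delta.
Proof.
  intros hm hK; pose proof ell_c_sq as hc; pose proof ell_c_pos; pose proof ell_c_lt_a.
  assert (hq : 0 < 1 + m * (c * c)) by nra.
  assert (hg : (1 + m * (c * c)) * focal_g m = 2 * m * a * c)
    by (unfold focal_g; field; lra).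
  assert (hKq : (1 + m * (c * c)) * focal_K m = m * (3 * (a * a) - b * b) - 1)
    by (unfold focal_K; field; lra).
  apply focal_quadratic_small_root.
  - assert (hquad : (1 + m * (c * c)) * (1 + m * (c * c)) * focal_quadratic (a * c * focal_g m) = 0)
      by (unfold focal_quadratic; clear - hc hg hKq hK; nsatz).
    apply Rmult_integral in hquad; destruct hquad as [hqq|]; [nra|assumption].
  - assert (c * focal_g m < 2 * a); [|nra].
    apply (Rmult_lt_reg_l (1 + m * (c * c))); [lra|].
    replace ((1 + m * (c * c)) * (c * focal_g m)) with (c * (2 * m * a * c)) by (rewrite <- hg; ring).
    nra.
Qed.

(* Main geometric step: for a 3-periodic, Joachimsthal's quantity is the same
   for the three sides, so the focal directions of the vertices pairwise satisfy
   one chord relation; hence they sum to (g, 0) with a c g = 2a^2 - b^2 - delta. *)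
Lemma three_periodic_focal_sum (P1 P2 P3 : pt) : three_periodic a b P1 P2 P3 ->
  exists g, padd (unit_dir f1 P1) (padd (unit_dir f1 P2) (unit_dir f1 P3)) = (g, 0)
            /\ a * c * g = 2 * (a * a) - b * b - delta.
Proof.
  intros (h1 & h2 & h3 & d12 & d23 & d13 & n1 & n2 & _).
  assert (ha : 0 < a) by lra.
  assert (j13 : joachimsthal a b P1 P3 = joachimsthal a b P1 P2)
    by (symmetry; exact (normal_bisects_joachimsthal _ _ _ _ _ n1)).
  assert (j23 : joachimsthal a b P2 P3 = joachimsthal a b P1 P2)
    by (rewrite (normal_bisects_joachimsthal _ _ _ _ _ n2); apply joachimsthal_sym; auto).
  set (m := joachimsthal a b P1 P2 ^ 2).
  pose proof (joachimsthal_chord_rel P1 P2 h1 h2 d12) as r12.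
  pose proof (joachimsthal_chord_rel P1 P3 h1 h3 d13) as r13.
  pose proof (joachimsthal_chord_rel P2 P3 h2 h3 d23) as r23.
  cbv zeta in r12, r13, r23; rewrite j13 in r13; rewrite j23 in r23; fold m in r12, r13, r23.
  destruct (ellipse_focal_polar P1 h1) as [u1 _].
  destruct (ellipse_focal_polar P2 h2) as [u2 _].
  destruct (ellipse_focal_polar P3 h3) as [u3 _].
  assert (injective : forall P Q, on_ellipse a b P -> on_ellipse a b Q -> P <> Q ->
                        unit_dir f1 P <> unit_dir f1 Q)
    by (intros P Q hP hQ hne e; exact (hne (focal_dir_injective P Q hP hQ e))).
  destruct (unit_triple_sum _ _ _ _ _ u1 u2 u3 (injective _ _ h1 h2 d12)
              (injective _ _ h1 h3 d13) (injective _ _ h2 h3 d23) r12 r13 r23) as [hsum hK].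
  exists (focal_g m); split; [exact hsum|].
  apply focal_g_value; [apply pow2_ge_0|rewrite hK; ring].
Qed.

Lemma centroid_of_focal_images (rho g : R) (u1 u2 u3 : pt) :
  dot u1 u1 = 1 -> dot u2 u2 = 1 -> dot u3 u3 = 1 ->
  padd u1 (padd u2 u3) = (g, 0) -> a * c * g = 2 * (a * a) - b * b - delta ->
  let img (u : pt) := padd f1 (pscale (rho ^ 2 * (a - c * fst u) / b ^ 2) u) in
  pdist (centroid (img u1) (img u2) (img u3))
    (- c * (1 + rho ^ 2 * (2 * a ^ 2 - b ^ 2 - delta) / (3 * a ^ 2 * b ^ 2)), 0)
  = rho ^ 2 * (2 * a ^ 2 - b ^ 2 - delta) / (3 * a * b ^ 2).
Proof.
  intros h1 h2 h3 hsum hk img.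
  destruct u1 as [C1 S1], u2 as [C2 S2], u3 as [C3 S3]; unfold dot, padd in *; cbn [fst snd] in *.
  injection hsum as hC hS.
  replace (2 * a ^ 2 - b ^ 2 - delta) with (2 * (a * a) - b * b - delta) by ring.
  pose proof ell_c_sq as hc; pose proof ell_c_pos; pose proof ell_delta_root as hroot.
  pose proof ell_delta_root_pos; unfold focal_quadratic in hroot.
  set (k := 2 * (a * a) - b * b - delta) in *.
  pose proof (unit_triple_second_moment g C1 S1 C2 S2 C3 S3 h1 h2 h3 hC hS) as hmom.
  set (Q := C1 * C1 + C2 * C2 + C3 * C3) in *; set (Z := C1 * S1 + C2 * S2 + C3 * S3) in *.
  assert (hA : c * (2 * (a * a * a) * g - a * a * c * (g * g + 3) + 2 * c * k) = 0)
    by (clear - hc hk hroot; nsatz).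
  apply Rmult_integral in hA; destruct hA as [|hA]; [lra|].
  assert (hkey : (a * a * a * g - a * a * c * Q + c * k) * (a * a * a * g - a * a * c * Q + c * k)
                 + a * a * a * a * (c * c) * (Z * Z) = a * a * (k * k))
    by (clear - hmom hA hk; nsatz).
  assert (ha : 0 < a) by lra.
  unfold img, centroid, focus1, pdist, dot, psub, pscale, padd; cbn [fst snd].
  set (lam := rho ^ 2 / (3 * a ^ 2 * b ^ 2)).
  match goal with |- sqrt (?dx * ?dx + ?dy * ?dy) = _ =>
    assert (hdx : dx = lam * (a * a * a * g - a * a * c * Q + c * k));
    [|assert (hdy : dy = lam * (- (a * a * c * Z)))] end.
  - unfold lam, Q; rewrite <- hC; field; lra.
  - unfold lam, Z; replace S3 with (- S1 - S2) by lra; field; lra.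
  - rewrite hdx, hdy, <- (sqrt_square (rho ^ 2 * k / (3 * a * b ^ 2))).
    + f_equal; unfold lam.
      transitivity ((rho ^ 2 / (3 * a ^ 2 * b ^ 2)) ^ 2 * (a * a * (k * k))); [rewrite <- hkey|];
        field; lra.
    + unfold Rdiv; apply Rmult_le_pos; [apply Rmult_le_pos; [apply pow2_ge_0|lra]|].
      apply Rlt_le, Rinv_0_lt_compat; apply Rmult_lt_0_compat; [lra|apply pow_lt; lra].
Qed.

End FocalCoordinates.

Theorem mainTheorem11 (a b rho : R) (P1 P2 P3 : pt) :
  a > b -> b > 0 -> rho > 0 ->
  three_periodic a b P1 P2 P3 ->
  let c := ell_c a b in
  let delta := ell_delta a b in
  let C2 : pt :=
    (- c * (1 + rho ^ 2 * (2 * a ^ 2 - b ^ 2 - delta) / (3 * a ^ 2 * b ^ 2)), 0) in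
  let R2 := rho ^ 2 * (2 * a ^ 2 - b ^ 2 - delta) / (3 * a * b ^ 2) in
  let X2 := centroid (focus_inv a b rho P1) (focus_inv a b rho P2)
                     (focus_inv a b rho P3) in
  pdist X2 C2 = R2.
Proof.
  intros hab hb _ hper; cbv zeta.
  pose proof hper as (h1 & h2 & h3 & _).
  destruct (three_periodic_focal_sum a b hb hab P1 P2 P3 hper) as [g [hsum hg]].
  destruct (ellipse_focal_polar a b hb hab P1 h1) as [u1 _].
  destruct (ellipse_focal_polar a b hb hab P2 h2) as [u2 _].
  destruct (ellipse_focal_polar a b hb hab P3 h3) as [u3 _].
  rewrite (focus_inv_focal a b hb hab rho P1 h1), (focus_inv_focal a b hb hab rho P2 h2),
    (focus_inv_focal a b hb hab rho P3 h3).
  exact (centroid_of_focal_images a b hb hab rho g _ _ _ u1 u2 u3 hsum hg).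
Qed.
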